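(* Let $G=(V,E)$ be a Generalized Bartlett graph on $V=\{1,\dots,r\}$ for which the ordering by labels is a Generalized Bartlett ordering. Let $0=p_0<p_1<\dots<p_r$ be integers and for each $i$ let $G_i=(V_i,E_i)$ be a Generalized Bartlett graph on $V_i=\{p_{i-1}+1,\dots,p_i\}$ for which the ordering by labels is a Generalized Bartlett ordering. Define the expanded graph $\widetilde G=(\widetilde V,\widetilde E)$ by $\widetilde V=V_1\cup\dots\cup V_r=\{1,\dots,p_r\}$ and $\{k,l\}\in\widetilde E$ iff either $\{k,l\}\in E_i$ for some $i$, or $k=p_i$, $l=p_j$ for some $i\ne j$ with $\{i,j\}\in E$. Then $\widetilde G$ is a Generalized Bartlett graph.
   Context: For a graph $H=(W,F)$ with $|W|=m$ and an ordering $\sigma:W\to\{1,\dots,m\}$ (bijection), define $F^\sigma_0=F$ and for $i=1,\dots,m-2$, $F^\sigma_i=F^\sigma_{i-1}\cup\{\{u,v\}:u\ne v,\sigma(u)>i,\sigma(v)>i,\{u,\sigma^{-1}(i)\},\{v,\sigma^{-1}(i)\}\in F^\sigma_{i-1}\}$; let $D^\sigma(F)=F^\sigma_{m-2}$. $\sigma$ is a Generalized Bartlett ordering of $H$ if there are no $u,v,w\in W$ with $\{u,v\},\{v,w\},\{u,w\}\notin F$ but all three in $D^\sigma(F)$; $H$ is a Generalized Bartlett graph if such an ordering exists. For a graph on a set of integers, ''the ordering by labels'' means the order-preserving bijection onto $\{1,\dots,m\}$. *)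

From mathcomp Require Import all_boot.
Set Implicit Arguments. Unset Strict Implicit. Unset Printing Implicit Defensive.

Definition is_graph (W : seq nat) (e : rel nat) : Prop :=
  [/\ uniq W,
      (forall x y, e x y -> (x \in W) && (y \in W)),
      (forall x y, e x y = e y x) &
      (forall x, ~~ e x x)].

(* sigma : W -> {1,...,m} bijection (m = |W|): injective on W with values in
   [1, m] (bijectivity follows since W is finite and duplicate-free). *)
Definition is_ordering (W : seq nat) (sigma : nat -> nat) : Prop :=
  {in W &, injective sigma} /\
  (forall x, x \in W -> (1 <= sigma x) && (sigma x <= size W)).

(* F^sigma_i as a relation; the witness w with sigma w == i is sigma^{-1}(i). *)
Fixpoint fill (W : seq nat) (e : rel nat) (sigma : nat -> nat) (i : nat)
  : rel nat :=
  match i with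
  | 0 => e
  | i'.+1 => fun u v =>
      fill W e sigma i' u v ||
      [&& u \in W, v \in W, u != v, i < sigma u, i < sigma v &
          has (fun w => [&& sigma w == i, fill W e sigma i' u w
                           & fill W e sigma i' v w]) W]
  end.

Definition Dfill (W : seq nat) (e : rel nat) (sigma : nat -> nat) : rel nat :=
  fill W e sigma (size W - 2).

Definition GB_ordering (W : seq nat) (e : rel nat) (sigma : nat -> nat) : Prop :=
  is_ordering W sigma /\
  ~ (exists u v w,
       [/\ u \in W, v \in W & w \in W] /\
       [/\ ~~ e u v, ~~ e v w & ~~ e u w] /\
       [/\ Dfill W e sigma u v, Dfill W e sigma v w & Dfill W e sigma u w]).

Definition GB_graph (W : seq nat) (e : rel nat) : Prop :=
  exists sigma, GB_ordering W e sigma.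

Definition interval (a n : nat) : seq nat := iota a.+1 n.
Definition label_order (a : nat) : nat -> nat := fun x => x - a.

Definition expanded_edge (r : nat) (e : rel nat) (p : nat -> nat)
    (es : nat -> rel nat) : rel nat :=
  fun k l =>
    has (fun i => es i k l) (iota 1 r) ||
    has (fun i => has (fun j => [&& i != j, e i j, k == p i & l == p j])
                      (iota 1 r)) (iota 1 r).

From mathcomp Require Import all_boot zify.
Set Implicit Arguments. Unset Strict Implicit. Unset Printing Implicit Defensive.

(* Order the vertices of the expanded graph by label.  Eliminating a vertex of
   V_i other than its top p_i only creates fill edges inside V_i, exactly as
   in G_i; eliminating a top p_c, whose remaining neighbours are all tops,
   acts on the tops exactly as eliminating c acts on G.  So every fill edge
   either lies in some V_i and is a fill edge of G_i, or joins p_a and p_b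
   where {a, b} is a fill edge of G.  A fill triangle cannot mix the two
   kinds, so it is a fill triangle of some G_i or of G, and therefore contains
   an edge of that graph, hence of the expanded graph. *)

Section Fill.
Variables (W : seq nat) (e : rel nat) (s : nat -> nat).

Lemma fill_monotone a b u v : a <= b -> fill W e s a u v -> fill W e s b u v.
Proof.
move=> /subnKC <-; elim: (b - a) => [|k IH] f; first by rewrite addn0.
by rewrite addnS /= IH.
Qed.

Lemma fill_irrefl t x : (forall x, ~~ e x x) -> ~~ fill W e s t x x.
Proof.
move=> e_irrefl; elim: t => [|t IH] /=; first exact: e_irrefl.
by rewrite (negbTE IH) eqxx /= !andbF.
Qed.

Lemma fill_sym t u v : (forall x y, e x y = e y x) -> fill W e s t u v = fill W e s t v u.
Proof.
move=> e_sym; elim: t u v => [|t IH] u v /=; first exact: e_sym.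
rewrite IH eq_sym; congr (_ || _).
rewrite andbCA; congr (_ && (_ && (_ && _))); rewrite andbCA; congr (_ && (_ && _)).
by apply: eq_has => w; rewrite [fill _ _ _ _ u w && _]andbC.
Qed.

Lemma fill_Dfill n u v : is_ordering W s -> size W - 2 <= n ->
  fill W e s n u v = Dfill W e s u v.
Proof.
case=> s_inj s_range /subnKC <-; elim: (n - _) u v => [|k IH] u v; first by rewrite addn0.
rewrite addnS /= IH.
case: (boolP (Dfill W e s u v)) => //= _.
apply/negP => /and5P [uW vW /eqP + lt_u /andP [lt_v _]]; apply.
apply: s_inj => //; move: (s_range u uW) (s_range v vW); lia.
Qed.

Lemma GB_ordering_triangle u v w : GB_ordering W e s ->
  u \in W -> v \in W -> w \in W ->
  Dfill W e s u v -> Dfill W e s v w -> Dfill W e s u w -> [|| e u v, e v w | e u w].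
Proof.
case=> _ noT uW vW wW duv dvw duw; apply: contraT; rewrite !negb_or => /and3P [nuv nvw nuw].
by case: noT; exists u, v, w.
Qed.

End Fill.

Lemma label_order_ordering a n : is_ordering (interval a n) (label_order a).
Proof.
rewrite /interval /label_order; split=> [x y | x]; rewrite ?size_iota !mem_iota; lia.
Qed.

Definition block (p : nat -> nat) (i : nat) : seq nat := interval (p i.-1) (p i - p i.-1).

Section Blocks.
Variables (r : nat) (p : nat -> nat).
Hypothesis p_incr : forall i, i < r -> p i < p i.+1.

Lemma p_homo : {in [pred i | i <= r] &, {homo p : i j / i < j}}.
Proof.
apply: homo_ltn_in => [y x z|i j|i]; rewrite ?inE.
- exact: ltn_trans.
- by move=> ir jr k /[!inE]; lia.
- by move=> _; exact: p_incr.
Qed.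

Lemma leq_p i j : i <= r -> j <= r -> (p i <= p j) = (i <= j).
Proof. by move=> ir jr; apply: (leq_mono_in p_homo); rewrite inE. Qed.

Lemma ltn_p i j : i <= r -> j <= r -> (p i < p j) = (i < j).
Proof. by move=> ir jr; apply: (leqW_mono_in (leq_mono_in p_homo)); rewrite inE. Qed.

Lemma p_inj i j : i <= r -> j <= r -> p i = p j -> i = j.
Proof. by move=> ir jr; apply: (incn_inj_in (leq_mono_in p_homo)); rewrite inE. Qed.

Lemma mem_block i x : i <= r -> (x \in block p i) = (p i.-1 < x <= p i).
Proof.
move=> ir; have : p i.-1 <= p i by rewrite leq_p ?leq_pred // (leq_trans (leq_pred i)).
rewrite /block /interval mem_iota; lia.
Qed.

Lemma block_disjoint i j x : 1 <= i <= r -> 1 <= j <= r ->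
  x \in block p i -> x \in block p j -> i = j.
Proof.
move=> /andP [i1 ir] /andP [j1 jr]; rewrite (mem_block x ir) (mem_block x jr) => xi xj.
have := leq_p ir (leq_trans (leq_pred j) jr).
have := leq_p jr (leq_trans (leq_pred i) ir).
lia.
Qed.

Lemma block_top i a x : 1 <= i <= r -> 1 <= a <= r ->
  x \in block p i -> x = p a -> a = i.
Proof.
move=> /andP [i1 ir] /andP [a1 ar]; rewrite (mem_block x ir) => + ex; rewrite ex.
have := ltn_p (leq_trans (leq_pred i) ir) ar.
have := leq_p ar ir.
lia.
Qed.

End Blocks.

Section Expanded.
Variables (r : nat) (e : rel nat) (p : nat -> nat) (es : nat -> rel nat).
Hypothesis p_incr : forall i, i < r -> p i < p i.+1.
Hypothesis e_graph : is_graph (interval 0 r) e.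
Hypothesis es_graph : forall i, 1 <= i <= r -> is_graph (block p i) (es i).

Local Notation G := (interval 0 r).
Local Notation W := (interval 0 (p r)).
Local Notation et := (expanded_edge r e p es).

Lemma mem_G a : (a \in G) = (1 <= a <= r).
Proof. by rewrite /interval mem_iota; lia. Qed.

Lemma expanded_edge_block i u v : 1 <= i <= r -> es i u v -> et u v.
Proof. by move=> ir euv; apply/orP; left; apply/hasP; exists i; rewrite ?mem_G. Qed.

Lemma expanded_edge_top a b : 1 <= a <= r -> 1 <= b <= r -> e a b -> et (p a) (p b).
Proof.
move=> ar br eab; have [_ _ _ e_irrefl] := e_graph.
have nab : a != b by apply: contraNneq (e_irrefl a) => ab; rewrite {2}ab.
apply/orP; right; apply/hasP; exists a; rewrite ?mem_G //.
by apply/hasP; exists b; rewrite ?mem_G // nab eab !eqxx.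
Qed.

Definition block_fill t u v := exists i, [/\ 1 <= i <= r, u \in block p i,
  v \in block p i & fill (block p i) (es i) (label_order (p i.-1)) (t - p i.-1) u v].

(* At step [t] the eliminated top vertices are the [p c <= t], so the
   elimination in [G] has reached [c.-1] for every remaining top [p c]. *)
Definition top_fill t u v := exists a b, [/\ 1 <= a <= r, 1 <= b <= r, u = p a, v = p b &
  forall c, 1 <= c <= r -> t < p c -> fill G e (label_order 0) c.-1 a b].

Lemma fill0_split u v : et u v -> block_fill 0 u v \/ top_fill 0 u v.
Proof.
case/orP => [/hasP [i iI euv] | /hasP [a aI /hasP [b bI /and4P [_ eab /eqP -> /eqP ->]]]].
- have ir : 1 <= i <= r by rewrite -mem_G.
  left; exists i.
  have [_ in_block _ _] := es_graph ir; have /andP [ui vi] := in_block _ _ euv.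
  by rewrite sub0n.
- have ar : 1 <= a <= r by rewrite -mem_G.
  have br : 1 <= b <= r by rewrite -mem_G.
  right; exists a, b; split=> // c _ _.
  exact: fill_monotone (leq0n _) eab.
Qed.

Lemma block_fillS t u v : block_fill t u v -> block_fill t.+1 u v.
Proof.
by case=> i [ir ui vi f]; exists i; split=> //; apply: fill_monotone f; apply: leq_sub2r.
Qed.

Lemma top_fillS t u v : top_fill t u v -> top_fill t.+1 u v.
Proof. by case=> a [b [ar br -> -> f]]; exists a, b; split=> // c cr /ltnW; apply: f. Qed.

Lemma block_top_fill_absurd t u v :
  t.+1 < u -> block_fill t u t.+1 -> top_fill t v t.+1 -> False.
Proof.
move=> ltu [i [ir ui wi _]] [b [c [_ cr _ ec _]]].
have ci := block_top p_incr ir cr wi ec; subst c.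
by move: ui; rewrite (mem_block p_incr _ (andP ir).2) -ec; lia.
Qed.

Lemma block_fill_step t u v : u != v -> t.+1 < u -> t.+1 < v ->
  block_fill t u t.+1 -> block_fill t v t.+1 -> block_fill t.+1 u v.
Proof.
move=> nuv ltu ltv [i [ir ui wi fu]] [j [jr vj wj fv]].
have ji := block_disjoint p_incr jr ir wj wi; subst j.
exists i; split=> //.
have := wi; rewrite (mem_block p_incr _ (andP ir).2) => /andP [lt_t _].
rewrite (_ : t.+1 - p i.-1 = (t - p i.-1).+1) /=; last lia.
apply/orP; right; apply/and5P; split; rewrite /label_order //; first lia.
apply/andP; split; first lia.
by apply/hasP; exists t.+1; rewrite // fu fv andbT; apply/eqP; lia.
Qed.

Lemma top_fill_step t u v : u != v -> t.+1 < u -> t.+1 < v ->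
  top_fill t u t.+1 -> top_fill t v t.+1 -> top_fill t.+1 u v.
Proof.
move=> nuv ltu ltv [a [c [ar cr eu ec fu]]] [b [c' [br cr' ev ec' fv]]].
have cc : c' = c by apply: (p_inj p_incr); rewrite -?ec -?ec'; lia.
subst c'; exists a, b; split=> // d dr ltd.
have c_lt x : 1 <= x <= r -> t.+1 < p x -> c < x.
  by move=> /andP [_ xr]; rewrite ec (ltn_p p_incr) // (andP cr).2.
apply: (fill_monotone (a := c)); first by have := c_lt d dr ltd; lia.
rewrite -(prednK (_ : 0 < c)) /=; last lia.
apply/orP; right; rewrite prednK ?(andP cr).1 // /label_order !subn0 !mem_G ar br.
have nab : a != b by apply: contra_neq nuv => ab; rewrite eu ev ab.
rewrite nab !c_lt -?eu -?ev //=; apply/hasP; exists c; first by rewrite mem_G.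
by rewrite subn0 eqxx fu ?fv // -ec.
Qed.

Lemma fill_expanded_split t u v :
  fill W et (label_order 0) t u v -> block_fill t u v \/ top_fill t u v.
Proof.
elim: t u v => [|t IH] u v /=; first exact: fill0_split.
case/orP => [/IH [/block_fillS | /top_fillS] | ]; [by left | by right | ].
case/and5P => _ _ nuv ltu /andP [ltv /hasP [w _ /and3P [/eqP ew fu fv]]].
rewrite /label_order !subn0 in ltu ltv ew; subst w.
case: (IH _ _ fu) (IH _ _ fv) => [bu|tu] [bv|tv].
- by left; apply: block_fill_step.
- by case: (block_top_fill_absurd ltu bu tv).
- by case: (block_top_fill_absurd ltv bv tu).
- by right; apply: top_fill_step.
Qed.

Definition block_edge u v := exists i, [/\ 1 <= i <= r, u \in block p i,
  v \in block p i & Dfill (block p i) (es i) (label_order (p i.-1)) u v].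

Definition top_edge u v := exists a b, [/\ 1 <= a <= r, 1 <= b <= r, u = p a, v = p b &
  Dfill G e (label_order 0) a b].

Lemma Dfill_expanded_split u v :
  Dfill W et (label_order 0) u v -> block_edge u v \/ top_edge u v.
Proof.
case/fill_expanded_split => [[i [ir ui vi f]] | [a [b [ar br -> -> f]]]].
- left; exists i; split=> //; rewrite -(@fill_Dfill _ _ _ (size W - 2 - p i.-1)) //.
    exact: label_order_ordering.
  have := leq_p p_incr (andP ir).2 (leqnn r); rewrite !size_iota (andP ir).2; lia.
- right; exists a, b; split=> //; rewrite -(@fill_Dfill _ _ _ (r.-1)).
  + apply: f; first lia.
    have := ltn_p p_incr (leq0n r) (leqnn r); rewrite size_iota; lia.
  + exact: label_order_ordering.
  + by rewrite size_iota; lia.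
Qed.

Lemma block_edge_sym u v : block_edge u v -> block_edge v u.
Proof.
case=> i [ir ui vi d]; exists i; split=> //.
by rewrite /Dfill fill_sym //; case: (es_graph ir).
Qed.

Lemma top_edge_sym u v : top_edge u v -> top_edge v u.
Proof.
case=> a [b [ar br -> -> d]]; exists b, a; split=> //.
by rewrite /Dfill fill_sym //; case: e_graph.
Qed.

Lemma block_edge_neq u v : block_edge u v -> u != v.
Proof.
case=> i [ir _ _ d]; apply: contraTneq d => ->.
by apply: fill_irrefl; case: (es_graph ir).
Qed.

Lemma top_edge_neq u v : top_edge u v -> u != v.
Proof.
case=> a [b [ar br -> -> d]].
apply: contraTneq d => /(p_inj p_incr (andP ar).2 (andP br).2) ->.
by apply: fill_irrefl; case: e_graph.
Qed.

Lemma block_top_edge_absurd x y z :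
  block_edge x y -> top_edge x z -> block_edge y z \/ top_edge y z -> False.
Proof.
move=> bxy txz kyz; have nxy := block_edge_neq bxy; have nxz := top_edge_neq txz.
case: bxy => i [ir xi yi _]; case: txz => a [b [ar br xa zb _]].
have ai := block_top p_incr ir ar xi xa; subst a.
case: kyz => [[k [kr yk zk _]] | [c [d [cr _ yc _ _]]]].
- have ki := block_disjoint p_incr kr ir yk yi; subst k.
  have bi := block_top p_incr ir br zk zb; subst b.
  by rewrite xa zb eqxx in nxz.
- have ci := block_top p_incr ir cr yi yc; subst c.
  by rewrite xa yc eqxx in nxy.
Qed.

Lemma edge_kinds_agree x y z :
  block_edge x y \/ top_edge x y -> block_edge y z \/ top_edge y z ->
  block_edge x z \/ top_edge x z ->
  [/\ block_edge x y, block_edge y z & block_edge x z] \/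
  [/\ top_edge x y, top_edge y z & top_edge x z].
Proof.
case=> [bxy | txy] kyz [bxz | txz].
- case: kyz => [byz | tyz]; first by left.
  by case: (block_top_edge_absurd (block_edge_sym bxz) (top_edge_sym tyz) (or_introl bxy)).
- by case: (block_top_edge_absurd bxy txz kyz).
- case: (block_top_edge_absurd bxz txy).
  by case: kyz => [/block_edge_sym | /top_edge_sym]; [left | right].
- case: kyz => [byz | tyz]; last by right.
  by case: (block_top_edge_absurd byz (top_edge_sym txy) (or_intror (top_edge_sym txz))).
Qed.

Hypothesis e_GB : GB_ordering G e (label_order 0).
Hypothesis es_GB : forall i, 1 <= i <= r ->
  GB_ordering (block p i) (es i) (label_order (p i.-1)).

Lemma expanded_GB_ordering : GB_ordering W et (label_order 0).
Proof.
split; first exact: label_order_ordering.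
case=> u [v [w [_ [[nuv nvw nuw] [duv dvw duw]]]]].
have [] := edge_kinds_agree (Dfill_expanded_split duv) (Dfill_expanded_split dvw)
  (Dfill_expanded_split duw).
- case=> [[i [ir ui vi fuv]] [j [jr vj wj fvw]] [k [kr uk wk fuw]]].
  have ji := block_disjoint p_incr jr ir vj vi; subst j.
  have ki := block_disjoint p_incr kr ir uk ui; subst k.
  have := GB_ordering_triangle (es_GB ir) ui vi wj fuv fvw fuw.
  by case/or3P => /(expanded_edge_block ir); apply/negP.
- case=> [[a [b [ar br ua vb fab]]] [b' [c [br' cr vb' wc fbc]]] [a' [c' [ar' cr' ua' wc' fac]]]].
  have bb : b' = b by apply: (p_inj p_incr); rewrite -?vb -?vb'; lia.
  have aa : a' = a by apply: (p_inj p_incr); rewrite -?ua -?ua'; lia.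
  have cc : c' = c by apply: (p_inj p_incr); rewrite -?wc -?wc'; lia.
  subst a' b' c'.
  have := GB_ordering_triangle e_GB _ _ _ fab fbc fac; rewrite !mem_G => /(_ ar br cr).
  case/or3P => [eab | ebc | eac].
  + by case/negP: nuv; rewrite ua vb; apply: expanded_edge_top.
  + by case/negP: nvw; rewrite vb wc; apply: expanded_edge_top.
  + by case/negP: nuw; rewrite ua wc; apply: expanded_edge_top.
Qed.

End Expanded.

Theorem theorem6 (r : nat) (e : rel nat) (p : nat -> nat) (es : nat -> rel nat) :
  is_graph (interval 0 r) e ->
  GB_graph (interval 0 r) e ->
  GB_ordering (interval 0 r) e (label_order 0) ->
  p 0 = 0 ->
  (forall i, i < r -> p i < p i.+1) ->
  (forall i, 1 <= i <= r ->
     [/\ is_graph (interval (p i.-1) (p i - p i.-1)) (es i),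
         GB_graph (interval (p i.-1) (p i - p i.-1)) (es i) &
         GB_ordering (interval (p i.-1) (p i - p i.-1)) (es i)
                     (label_order (p i.-1))]) ->
  GB_graph (interval 0 (p r)) (expanded_edge r e p es).
Proof.
move=> e_graph _ e_GB _ p_incr blocks; exists (label_order 0).
apply: expanded_GB_ordering => // i /blocks; by case.
Qed.
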